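(* Let $\beta\ge0$, $0<a\le1+\beta$, and $x$ real with $0\le x\le\frac{1+\beta}{a}x<1$. For integers $j,k\ge0$ define $$\alpha_{j,k}=\frac{(1-j)_k}{k!}B^{(j)}_k(0)\,(1+\beta)^{-k},\qquad \gamma_{j,k}=(-1)^k\frac{(j+1)_k}{k!}B^{(-j)}_k(0)\,a^{-k}.$$ Then for every positive integer $n$ and every $t>0$, $$\left|{}_2F_1\!\left(\begin{matrix}1,t(1+\beta)\\ at+1\end{matrix};x\right)-\sum_{i=0}^{n-1}\sum_{j=0}^{i}\sum_{k=0}^\infty\frac{\gamma_{k,j}\alpha_{k,i-j}}{t^i}\left(\frac{1+\beta}{a}x\right)^k\right|\le\frac{(2n)!}{2}\frac{(1+\beta)x\,(a+(1+\beta)x)}{a^{n+2}\left(1-\frac{(1+\beta)x}{a}\right)^{2n+1}}\frac1{t^n},$$ and consequently, as $t\to\infty$, one has the asymptotic series $${}_2F_1\!\left(\begin{matrix}1,t(1+\beta)\\ at+1\end{matrix};x\right)\sim\sum_{i=0}^\infty t^{-i}\left(\sum_{j=0}^{i}\sum_{k=0}^\infty\gamma_{k,j}\alpha_{k,i-j}\left(\frac{1+\beta}{a}x\right)^k\right).$$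
   Context: $(q)_0=1$, $(q)_n=q(q+1)\cdots(q+n-1)$. ${}_2F_1\!\left(\begin{matrix}a_1,a_2\\ d\end{matrix};x\right)=\sum_{n\ge0}\frac{(a_1)_n(a_2)_n}{(d)_n}\frac{x^n}{n!}$. The generalized Bernoulli numbers $B^{(j)}_k(0)$ (for integer $j$, possibly negative) are defined by $\left(\frac{s}{e^s-1}\right)^j=\sum_{k=0}^\infty\frac{s^k}{k!}B^{(j)}_k(0)$ for $|s|<2\pi$. (With these definitions, $\frac{((1+\beta)t)_j}{((1+\beta)t)^j}=\sum_k\alpha_{j,k}t^{-k}$ and, for $at>j$, $\frac{(at)^j}{(at+1)_j}=\sum_k\gamma_{j,k}t^{-k}$.) *)

From Stdlib Require Import Reals ZArith.
From Coquelicot Require Import Coquelicot.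
Open Scope R_scope.

Fixpoint poch (q : R) (n : nat) : R :=
  match n with
  | O => 1
  | S m => poch q m * (q + INR m)
  end.

Definition hyp2F1_terms (a1 a2 d x : R) : nat -> R :=
  fun n => poch a1 n * poch a2 n / poch d n * x ^ n / INR (fact n).

Definition hyp2F1 (a1 a2 d x : R) : R := Series (hyp2F1_terms a1 a2 d x).

Definition bern_gen_fun (j : Z) (s : R) : R :=
  if Req_EM_T s 0 then 1 else powerRZ (s / (exp s - 1)) j.

(* Generalized Bernoulli numbers B^{(j)}_k(0): k! times the k-th Taylor
   coefficient at 0 of (s/(e^s-1))^j, i.e. its k-th derivative at 0. *)
Definition genBernoulli (j : Z) (k : nat) : R :=
  Derive_n (bern_gen_fun j) k 0.

Definition alpha (beta : R) (j k : nat) : R :=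
  poch (1 - INR j) k / INR (fact k) * genBernoulli (Z.of_nat j) k / (1 + beta) ^ k.

Definition gamma (a : R) (j k : nat) : R :=
  (-1) ^ k * (poch (INR j + 1) k / INR (fact k)) * genBernoulli (- Z.of_nat j) k / a ^ k.

Definition inner_terms (beta a x : R) (i j : nat) : nat -> R :=
  fun k => gamma a k j * alpha beta k (i - j) * ((1 + beta) / a * x) ^ k.

Definition asym_coef (beta a x : R) (i : nat) : R :=
  sum_n (fun j => Series (inner_terms beta a x i j)) i.

Definition asym_partial (beta a x t : R) (n : nat) : R :=
  match n with
  | O => 0
  | S m => sum_n (fun i => asym_coef beta a x i / t ^ i) m
  end.

From Stdlib Require Import Reals ZArith Lia Lra.
From Coquelicot Require Import Coquelicot.
Open Scope R_scope.

(* Put u = 1/t and y = (1+beta)x/a.  The k-th term of the hypergeometric series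
   is y^k R_k(u), where R_k(u) = prod_{l<k} (1 + l u/(1+beta)) / (1 + (l+1) u/a)
   lies in (0, 1].  Differentiating the linear ODE
   s f_j' = j f_j - j s f_j - j f_{j+1} satisfied by f_j(s) = (s/(e^s-1))^j gives
   recurrences for the generalized Bernoulli numbers, which say that gamma_{k,.}
   and alpha_{k,.} are the Taylor coefficients of prod_{l=1}^{k} (1 + l u/a)^-1
   and prod_{l<k} (1 + l u/(1+beta)); hence the inner sums defining the
   expansion are the Taylor coefficients of R_k.  Splitting off one factor at a
   time bounds the Taylor remainder of R_k after n terms by h_n(1,...,k) (u/a)^n,
   and h_n(1,...,k) <= (2n)!/2 * binom(k-1+2n, 2n).  Summing against y^k with the
   negative binomial series bounds the error by
   (2n)!/2 * y (1-y)^-(2n+1) (u/a)^n; the stated bound carries an extra factor 1+y. *)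

(** * Smooth functions *)

Definition Cn (n : nat) (f : R -> R) : Prop :=
  forall k x, (k <= n)%nat -> ex_derive_n f k x.

Definition smooth (f : R -> R) : Prop := forall n, Cn n f.

Lemma Derive_n_S f k x : Derive_n f (S k) x = Derive_n (Derive f) k x.
Proof. rewrite <- Nat.add_1_r, <- Derive_n_comp. reflexivity. Qed.

Lemma Cn_0 f : Cn 0 f.
Proof. intros k x Hk. replace k with 0%nat by lia. exact I. Qed.

Lemma Cn_S n f : (forall x, ex_derive f x) -> Cn n (Derive f) -> Cn (S n) f.
Proof.
  intros Hf HDf [|[|k]] x Hk; [exact I | apply Hf |].
  apply ex_derive_ext with (Derive_n (Derive f) k).
  - intros y. symmetry. apply Derive_n_S.
  - apply (HDf (S k)). lia.
Qed.

Lemma Cn_S_ex_derive n f : Cn (S n) f -> forall x, ex_derive f x.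
Proof. intros Hf x. apply (Hf 1%nat). lia. Qed.

Lemma Cn_S_Derive n f : Cn (S n) f -> Cn n (Derive f).
Proof.
  intros Hf [|k] x Hk; [exact I |].
  apply ex_derive_ext with (Derive_n f (S k)).
  - intros y. apply Derive_n_S.
  - apply (Hf (S (S k))). lia.
Qed.

Lemma Cn_le m n f : (m <= n)%nat -> Cn n f -> Cn m f.
Proof. intros Hmn Hf k x Hk. apply Hf. lia. Qed.

Lemma Cn_ext n f g : (forall x, f x = g x) -> Cn n f -> Cn n g.
Proof. intros Hfg Hf k x Hk. apply ex_derive_n_ext with f; auto. Qed.

Lemma Cn_plus n f g : Cn n f -> Cn n g -> Cn n (fun x => f x + g x).
Proof.
  intros Hf Hg k x Hk.
  apply ex_derive_n_plus; apply filter_forall; intros y j Hj;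
    [apply Hf | apply Hg]; lia.
Qed.

Lemma Cn_scal n c f : Cn n f -> Cn n (fun x => c * f x).
Proof. intros Hf k x Hk. apply ex_derive_n_scal_l, Hf, Hk. Qed.

Lemma Cn_id n : Cn n (fun x => x).
Proof.
  destruct n as [|n]; [apply Cn_0 |].
  apply Cn_S; [intros x; apply ex_derive_id |].
  apply Cn_ext with (fun _ => 1); [intros x; symmetry; apply Derive_id |].
  intros k x _. apply ex_derive_n_const.
Qed.

Lemma Cn_mult n : forall f g, Cn n f -> Cn n g -> Cn n (fun x => f x * g x).
Proof.
  induction n as [|n IH]; intros f g Hf Hg; [apply Cn_0 |].
  pose proof (Cn_S_ex_derive n f Hf) as Hf'. pose proof (Cn_S_ex_derive n g Hg) as Hg'.
  apply Cn_S; [intros x; apply ex_derive_mult; auto |].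
  apply Cn_ext with (fun x => Derive f x * g x + f x * Derive g x).
  - intros x. symmetry. apply Derive_mult; auto.
  - apply Cn_plus; apply IH.
    + apply Cn_S_Derive, Hf.
    + apply Cn_le with (S n); [lia | exact Hg].
    + apply Cn_le with (S n); [lia | exact Hf].
    + apply Cn_S_Derive, Hg.
Qed.

Lemma Cn_inv n : forall g, smooth g -> (forall x, g x <> 0) -> Cn n (fun x => / g x).
Proof.
  induction n as [|n IH]; intros g Hg Hg0; [apply Cn_0 |].
  pose proof (Cn_S_ex_derive 0 g (Hg 1%nat)) as Hg'.
  apply Cn_S; [intros x; apply ex_derive_inv; [apply Hg' | apply Hg0] |].
  apply Cn_ext with (fun x => -1 * (Derive g x * (/ g x * / g x))).
  - intros x. rewrite Derive_inv; [| apply Hg' | apply Hg0]. field. apply Hg0.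
  - apply Cn_scal, Cn_mult; [apply Cn_S_Derive, Hg | apply Cn_mult; apply IH; assumption].
Qed.

Lemma Cn_exp n : forall h, Cn n h -> Cn n (fun x => exp (h x)).
Proof.
  induction n as [|n IH]; intros h Hh; [apply Cn_0 |].
  pose proof (Cn_S_ex_derive n h Hh) as Hh'.
  apply Cn_S.
  - intros x. apply ex_derive_comp; [eexists; apply is_derive_exp | auto].
  - apply Cn_ext with (fun x => Derive h x * exp (h x)).
    + intros x. symmetry. apply is_derive_unique.
      auto_derive; [apply Hh' | rewrite Rmult_1_l; reflexivity].
    + apply Cn_mult; [apply Cn_S_Derive, Hh |].
      apply IH, Cn_le with (S n); [lia | exact Hh].
Qed.

Lemma Cn_ln n g : smooth g -> (forall x, 0 < g x) -> Cn n (fun x => ln (g x)).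
Proof.
  intros Hg Hg0. destruct n as [|n]; [apply Cn_0 |].
  pose proof (Cn_S_ex_derive 0 g (Hg 1%nat)) as Hg'.
  apply Cn_S.
  - intros x. apply ex_derive_comp; [eexists; apply is_derive_ln, Hg0 | auto].
  - apply Cn_ext with (fun x => Derive g x * / g x).
    + intros x. symmetry. apply is_derive_unique.
      auto_derive; [repeat split; [apply Hg' | apply Hg0] | rewrite Rmult_1_l; reflexivity].
    + apply Cn_mult; [apply Cn_S_Derive, Hg | apply Cn_inv; auto].
      intros x. apply Rgt_not_eq, Hg0.
Qed.

Lemma smooth_ex_derive f : smooth f -> forall x, ex_derive f x.
Proof. intros Hf. apply (Cn_S_ex_derive 0), Hf. Qed.

Lemma smooth_Derive f : smooth f -> smooth (Derive f).
Proof. intros Hf n. apply Cn_S_Derive, Hf. Qed.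

Lemma smooth_xmul f : smooth f -> smooth (fun x => x * f x).
Proof. intros Hf n. apply Cn_mult; [apply Cn_id | apply Hf]. Qed.

Lemma smooth_scal c f : smooth f -> smooth (fun x => c * f x).
Proof. intros Hf n. apply Cn_scal, Hf. Qed.

Lemma smooth_minus f g : smooth f -> smooth g -> smooth (fun x => f x - g x).
Proof.
  intros Hf Hg n. apply Cn_ext with (fun x => f x + -1 * g x); [intros; ring |].
  apply Cn_plus; [apply Hf | apply Cn_scal, Hg].
Qed.

Lemma Derive_n_smooth_plus n f g x : smooth f -> smooth g ->
  Derive_n (fun y => f y + g y) n x = Derive_n f n x + Derive_n g n x.
Proof.
  intros Hf Hg. apply Derive_n_plus; apply filter_forall; intros y k Hk;
    [apply (Hf n) | apply (Hg n)]; exact Hk.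
Qed.

Lemma Derive_n_smooth_minus n f g x : smooth f -> smooth g ->
  Derive_n (fun y => f y - g y) n x = Derive_n f n x - Derive_n g n x.
Proof.
  intros Hf Hg. apply Derive_n_minus; apply filter_forall; intros y k Hk;
    [apply (Hf n) | apply (Hg n)]; exact Hk.
Qed.

Lemma Derive_xmul h x : ex_derive h x -> Derive (fun s => s * h s) x = h x + x * Derive h x.
Proof.
  intros Hh. rewrite Derive_mult, Derive_id; [| apply ex_derive_id | exact Hh].
  change (Derive (fun s => h s)) with (Derive h). ring.
Qed.

Lemma Derive_n_xmul m h x : smooth h ->
  Derive_n (fun s => s * h s) (S m) x = x * Derive_n h (S m) x + INR (S m) * Derive_n h m x.
Proof.
  revert h. induction m as [|m IH]; intros h Hh.
  - simpl. rewrite Derive_xmul by apply smooth_ex_derive, Hh.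
    change (Derive (fun y => h y)) with (Derive h). ring.
  - rewrite Derive_n_S, (Derive_n_ext _ (fun s => h s + s * Derive h s)).
    + rewrite Derive_n_smooth_plus, IH, !Derive_n_S, (S_INR (S m)).
      * ring.
      * apply smooth_Derive, Hh.
      * exact Hh.
      * apply smooth_xmul, smooth_Derive, Hh.
    + intros s. apply Derive_xmul, smooth_ex_derive, Hh.
Qed.

(** * Generalized Bernoulli numbers *)

Definition exprel_coef (n : nat) : R := / INR (fact (S n)).

Definition exprel (s : R) : R := PSeries exprel_coef s.

Lemma CV_radius_inv_fact p : CV_radius (fun n => / INR (fact (p + n))) = p_infty.
Proof.
  apply CV_radius_infinite_DAlembert.
  - intros n. apply Rinv_neq_0_compat, INR_fact_neq_0.
  - apply is_lim_seq_ext with (fun n => / INR (n + S p)).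
    + intros n. replace (p + S n)%nat with (S (p + n)) by lia.
      replace (n + S p)%nat with (S (p + n)) by lia.
      cbn [fact]. rewrite mult_INR.
      assert (Hratio : / (INR (S (p + n)) * INR (fact (p + n))) / / INR (fact (p + n))
                       = / INR (S (p + n)))
        by (field; split; [apply not_0_INR; lia | apply INR_fact_neq_0]).
      rewrite Hratio, Rabs_pos_eq; [reflexivity |].
      left. apply Rinv_0_lt_compat, lt_0_INR. lia.
    + replace (Finite 0) with (Rbar_inv p_infty) by reflexivity.
      apply is_lim_seq_inv; [| discriminate].
      apply (is_lim_seq_incr_n INR (S p) p_infty), is_lim_seq_INR.
Qed.

Lemma exprel_mul s : s * exprel s = exp s - 1.
Proof.
  rewrite exp_Reals, (PSeries_decr_1 (fun n => / INR (fact n))).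
  - unfold exprel, PS_decr_1, exprel_coef. simpl. field.
  - apply CV_radius_inside.
    change (fun n => / INR (fact n)) with (fun n => / INR (fact (0 + n))).
    rewrite CV_radius_inv_fact. exact I.
Qed.

Lemma exprel_0 : exprel 0 = 1.
Proof. unfold exprel. rewrite PSeries_0. unfold exprel_coef. simpl. field. Qed.

Lemma smooth_exprel : smooth exprel.
Proof.
  intros n k x _. apply ex_derive_n_PSeries.
  change exprel_coef with (fun n => / INR (fact (1 + n))).
  rewrite CV_radius_inv_fact. exact I.
Qed.

Lemma exprel_pos s : 0 < exprel s.
Proof.
  destruct (Rtotal_order s 0) as [Hs | [-> | Hs]].
  - assert (exp s < 1) by (rewrite <- exp_0; apply exp_increasing, Hs).
    pose proof (exprel_mul s). nra.
  - rewrite exprel_0. lra.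
  - assert (1 < exp s) by (rewrite <- exp_0; apply exp_increasing, Hs).
    pose proof (exprel_mul s). nra.
Qed.

Lemma exprel_derive s : exprel s + s * Derive exprel s = exp s.
Proof.
  rewrite <- Derive_xmul by apply smooth_ex_derive, smooth_exprel.
  rewrite (Derive_ext _ (fun s => exp s - 1)) by apply exprel_mul.
  apply is_derive_unique. auto_derive; [exact I | ring].
Qed.

Definition bernoulli_gf (j : Z) (s : R) : R := exp (- IZR j * ln (exprel s)).

Lemma bern_gen_funE j s : bern_gen_fun j s = bernoulli_gf j s.
Proof.
  unfold bern_gen_fun, bernoulli_gf. destruct (Req_EM_T s 0) as [-> | Hs].
  - rewrite exprel_0, ln_1, Rmult_0_r, exp_0. reflexivity.
  - pose proof (exprel_pos s) as Hpos. pose proof (exprel_mul s) as Hmul.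
    replace (s / (exp s - 1)) with (/ exprel s) by (rewrite <- Hmul; field; lra).
    rewrite powerRZ_Rpower by (apply Rinv_0_lt_compat, Hpos).
    unfold Rpower. rewrite ln_Rinv by exact Hpos. f_equal. ring.
Qed.

Lemma smooth_bernoulli_gf j : smooth (bernoulli_gf j).
Proof. intros n. apply Cn_exp, Cn_scal, Cn_ln; [apply smooth_exprel | apply exprel_pos]. Qed.

Lemma bernoulli_gf_succ j s : bernoulli_gf (j + 1) s = bernoulli_gf j s / exprel s.
Proof.
  pose proof (exprel_pos s) as Hpos. unfold bernoulli_gf.
  rewrite plus_IZR.
  replace (- (IZR j + 1) * ln (exprel s)) with (- IZR j * ln (exprel s) + - ln (exprel s))
    by ring.
  rewrite exp_plus, exp_Ropp, exp_ln by exact Hpos. reflexivity.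
Qed.

Lemma bernoulli_gf_ode j s :
  s * Derive (bernoulli_gf j) s
  = IZR j * bernoulli_gf j s - IZR j * (s * bernoulli_gf j s) - IZR j * bernoulli_gf (j + 1) s.
Proof.
  pose proof (exprel_pos s) as Hpos. pose proof (exprel_mul s) as Hmul.
  pose proof (exprel_derive s) as Hder.
  assert (HD : Derive (bernoulli_gf j) s
               = - IZR j * (Derive exprel s / exprel s) * bernoulli_gf j s).
  { apply is_derive_unique. unfold bernoulli_gf. auto_derive.
    - split; [apply smooth_ex_derive, smooth_exprel | split; [exact Hpos | exact I]].
    - change (Derive (fun x => exprel x) s) with (Derive exprel s). field. lra. }
  rewrite HD, bernoulli_gf_succ.
  replace (s * (- IZR j * (Derive exprel s / exprel s) * bernoulli_gf j s))
    with (- IZR j * bernoulli_gf j s * (s * Derive exprel s) / exprel s) by (field; lra).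
  replace (s * Derive exprel s) with (1 + s * exprel s - exprel s) by lra.
  field. lra.
Qed.

Lemma genBernoulliE j m : genBernoulli j m = Derive_n (bernoulli_gf j) m 0.
Proof. apply Derive_n_ext, bern_gen_funE. Qed.

Lemma genBernoulli_0_r j : genBernoulli j 0 = 1.
Proof.
  rewrite genBernoulliE. unfold bernoulli_gf. simpl.
  rewrite exprel_0, ln_1, Rmult_0_r, exp_0. reflexivity.
Qed.

Lemma genBernoulli_0_l m : genBernoulli 0 (S m) = 0.
Proof.
  rewrite genBernoulliE, (Derive_n_ext _ (fun _ => 1)); [apply Derive_n_const |].
  intros s. unfold bernoulli_gf. rewrite Ropp_0, Rmult_0_l, exp_0. reflexivity.
Qed.

Lemma genBernoulli_rec j m :
  IZR j * genBernoulli (j + 1) (S m)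
  = (IZR j - INR (S m)) * genBernoulli j (S m) - IZR j * INR (S m) * genBernoulli j m.
Proof.
  rewrite !genBernoulliE.
  pose proof (smooth_bernoulli_gf j) as Hj. pose proof (smooth_bernoulli_gf (j + 1)) as Hj1.
  assert (E : Derive_n (fun s => s * Derive (bernoulli_gf j) s) (S m) 0
    = Derive_n (fun s => IZR j * bernoulli_gf j s - IZR j * (s * bernoulli_gf j s)
                         - IZR j * bernoulli_gf (j + 1) s) (S m) 0)
    by (apply Derive_n_ext, bernoulli_gf_ode).
  rewrite Derive_n_xmul, !Derive_n_smooth_minus, !Derive_n_scal_l, Derive_n_xmul,
    <- !Derive_n_S, !Rmult_0_l, Rplus_0_l in E.
  - lra.
  - exact Hj.
  - apply smooth_scal, Hj.
  - apply smooth_scal, smooth_xmul, Hj.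
  - apply smooth_minus; [apply smooth_scal, Hj | apply smooth_scal, smooth_xmul, Hj].
  - apply smooth_scal, Hj1.
  - apply smooth_Derive, Hj.
Qed.

Lemma poch_S_l q m : poch q (S m) = q * poch (q + 1) m.
Proof.
  induction m as [|m IH]; [simpl; ring |].
  change (poch q (S (S m))) with (poch q (S m) * (q + INR (S m))).
  rewrite IH, S_INR. simpl. ring.
Qed.

Lemma INR_fact_S m : INR (fact (S m)) = INR (S m) * INR (fact m).
Proof. rewrite fact_simpl. apply mult_INR. Qed.

Lemma alpha_0_r beta k : alpha beta k 0 = 1.
Proof. unfold alpha. rewrite genBernoulli_0_r. simpl. field. Qed.

Lemma gamma_0_r a k : gamma a k 0 = 1.
Proof. unfold gamma. rewrite genBernoulli_0_r. simpl. field. Qed.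

Lemma alpha_0_l beta m : alpha beta 0 (S m) = 0.
Proof. unfold alpha. simpl Z.of_nat. rewrite genBernoulli_0_l. unfold Rdiv. ring. Qed.

Lemma gamma_0_l a m : gamma a 0 (S m) = 0.
Proof. unfold gamma. simpl Z.of_nat. rewrite Z.opp_0, genBernoulli_0_l. unfold Rdiv. ring. Qed.

Lemma alpha_rec beta k m : 1 + beta <> 0 ->
  alpha beta (S k) (S m) = alpha beta k (S m) + INR k / (1 + beta) * alpha beta k m.
Proof.
  intros Hb. unfold alpha.
  pose proof (genBernoulli_rec (Z.of_nat k) m) as Hr.
  rewrite <- INR_IZR_INZ in Hr.
  replace (Z.of_nat k + 1)%Z with (Z.of_nat (S k)) in Hr by lia.
  replace (1 - INR (S k)) with (- INR k) by (rewrite S_INR; ring).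
  rewrite poch_S_l. replace (- INR k + 1) with (1 - INR k) by ring.
  change (poch (1 - INR k) (S m)) with (poch (1 - INR k) m * (1 - INR k + INR m)).
  rewrite !INR_fact_S.
  pose proof (INR_fact_neq_0 m) as Hf. pose proof (pow_nonzero _ m Hb) as Hbm.
  assert (HS : INR (S m) <> 0) by (apply not_0_INR; lia).
  transitivity (- poch (1 - INR k) m / (INR (S m) * INR (fact m))
                * (INR k * genBernoulli (Z.of_nat (S k)) (S m)) / (1 + beta) ^ S m).
  { simpl pow. field. auto. }
  rewrite Hr. simpl pow. rewrite S_INR in *. field. auto.
Qed.

Lemma gamma_rec a k m : a <> 0 ->
  gamma a (S k) (S m) + INR (S k) / a * gamma a (S k) m = gamma a k (S m).
Proof.
  intros Ha. unfold gamma.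
  pose proof (genBernoulli_rec (- Z.of_nat (S k)) m) as Hr.
  replace (- Z.of_nat (S k) + 1)%Z with (- Z.of_nat k)%Z in Hr by lia.
  rewrite opp_IZR, <- INR_IZR_INZ in Hr.
  set (B1 := genBernoulli (- Z.of_nat (S k)) (S m)) in *.
  set (B := genBernoulli (- Z.of_nat k) (S m)) in *.
  set (B0 := genBernoulli (- Z.of_nat (S k)) m) in *.
  pose proof (pos_INR k) as Hk. pose proof (pos_INR m) as Hm.
  rewrite !S_INR in *.
  assert (E : B1 = (INR k + 1) * (B + (INR m + 1) * B0) / (INR k + INR m + 2)).
  { field_simplify_eq; lra. }
  change (poch (INR k + 1 + 1) (S m)) with (poch (INR k + 1 + 1) m * (INR k + 1 + 1 + INR m)).
  rewrite E, (poch_S_l (INR k + 1)), !INR_fact_S, !S_INR.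
  pose proof (INR_fact_neq_0 m) as Hf. pose proof (pow_nonzero _ m Ha) as Ham.
  simpl pow. field. repeat split; auto; lra.
Qed.

(** * Power series coefficients *)

Definition PS_one (n : nat) : R := match n with O => 1 | S _ => 0 end.

(* Restated at type [R] (the library states them in a normed module), so that
   [ring] and [lra] apply after rewriting. *)
Lemma PS_incr_1_0 (c : nat -> R) : @eq R (PS_incr_1 c 0) 0.
Proof. reflexivity. Qed.

Lemma PS_incr_1_S (c : nat -> R) n : @eq R (PS_incr_1 c (S n)) (c n).
Proof. reflexivity. Qed.

Definition PS_mult_lin (d : R) (c : nat -> R) (n : nat) : R := c n + d * PS_incr_1 c n.

Lemma PS_mult_lin_inj (d : R) (c c' : nat -> R) :
  (forall n, PS_mult_lin d c n = PS_mult_lin d c' n) -> forall n, c n = c' n.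
Proof.
  intros H n. induction n as [|n IH].
  - specialize (H 0%nat). unfold PS_mult_lin in H. rewrite !PS_incr_1_0 in H. lra.
  - specialize (H (S n)). unfold PS_mult_lin in H. rewrite !PS_incr_1_S, IH in H. lra.
Qed.

Lemma PS_mult_ext (c c' e e' : nat -> R) n : (forall m, c m = c' m) -> (forall m, e m = e' m) ->
  PS_mult c e n = PS_mult c' e' n.
Proof. intros Hc He. apply sum_eq. intros i _. rewrite Hc, He. reflexivity. Qed.

Lemma PS_mult_incr_1_l (c e : nat -> R) n : PS_mult (PS_incr_1 c) e n = PS_incr_1 (PS_mult c e) n.
Proof.
  unfold PS_mult. destruct n as [|n].
  - cbn [sum_f_R0]. rewrite !PS_incr_1_0. ring.
  - rewrite decomp_sum, PS_incr_1_0, PS_incr_1_S by lia. simpl. ring.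
Qed.

Lemma PS_mult_incr_1_r (c e : nat -> R) n : PS_mult c (PS_incr_1 e) n = PS_incr_1 (PS_mult c e) n.
Proof.
  unfold PS_mult. destruct n as [|n].
  - cbn [sum_f_R0]. rewrite !PS_incr_1_0. ring.
  - rewrite tech5, Nat.sub_diag, PS_incr_1_S, PS_incr_1_0, Rmult_0_r, Rplus_0_r.
    apply sum_eq. intros i Hi. replace (S n - i)%nat with (S (n - i)) by lia. reflexivity.
Qed.

Lemma PS_mult_lin_mult_l (d : R) (c e : nat -> R) n :
  PS_mult (PS_mult_lin d c) e n = PS_mult_lin d (PS_mult c e) n.
Proof.
  unfold PS_mult_lin. rewrite <- PS_mult_incr_1_l. unfold PS_mult.
  rewrite scal_sum, <- plus_sum. apply sum_eq. intros i _. ring.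
Qed.

Lemma PS_mult_lin_mult_r (d : R) (c e : nat -> R) n :
  PS_mult c (PS_mult_lin d e) n = PS_mult_lin d (PS_mult c e) n.
Proof.
  unfold PS_mult_lin. rewrite <- PS_mult_incr_1_r. unfold PS_mult.
  rewrite scal_sum, <- plus_sum. apply sum_eq. intros i _. ring.
Qed.

Lemma PS_mult_lin_ext d (c c' : nat -> R) n :
  (forall m, c m = c' m) -> PS_mult_lin d c n = PS_mult_lin d c' n.
Proof.
  intros H. unfold PS_mult_lin. destruct n as [|n].
  - rewrite !PS_incr_1_0, H. reflexivity.
  - rewrite !PS_incr_1_S, !H. reflexivity.
Qed.

Lemma PS_mult_one_r (c : nat -> R) n : PS_mult c PS_one n = c n.
Proof.
  unfold PS_mult. destruct n as [|n]; [simpl; ring |].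
  rewrite tech5, Nat.sub_diag, (sum_eq _ (fun _ => 0)), sum_cte; [simpl; ring |].
  intros i Hi. replace (S n - i)%nat with (S (n - i)) by lia. simpl. ring.
Qed.

Definition frac_lin (c d u : R) : R := (1 + c * u) / (1 + d * u).

Definition frac_lin_coef (c d : R) (n : nat) : R :=
  match n with O => 1 | S m => (c - d) * (- d) ^ m end.

Lemma PS_mult_lin_frac_lin_coef c d n :
  PS_mult_lin d (frac_lin_coef c d) n = PS_mult_lin c PS_one n.
Proof.
  unfold PS_mult_lin. destruct n as [|[|n]]; rewrite ?PS_incr_1_0, ?PS_incr_1_S; simpl; ring.
Qed.

Definition poly_trunc (c : nat -> R) (N : nat) (u : R) : R :=
  sum_f_R0 (fun i => c i * u ^ i) N.

Lemma poly_trunc_PS_mult (c e : nat -> R) N u :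
  poly_trunc (PS_mult c e) N u = sum_f_R0 (fun l => c l * u ^ l * poly_trunc e (N - l) u) N.
Proof.
  induction N as [|N IH].
  - unfold poly_trunc, PS_mult. simpl. ring.
  - unfold poly_trunc at 1. rewrite tech5. fold (poly_trunc (PS_mult c e) N u). rewrite IH.
    rewrite tech5, Nat.sub_diag. unfold PS_mult. rewrite tech5, Nat.sub_diag.
    rewrite (sum_eq (fun l => c l * u ^ l * poly_trunc e (S N - l) u)
                    (fun l => c l * u ^ l * poly_trunc e (N - l) u
                              + c l * e (S N - l)%nat * u ^ S N)).
    + rewrite plus_sum, <- scal_sum. unfold poly_trunc. simpl. ring.
    + intros l Hl. replace (S N - l)%nat with (S (N - l)) by lia.
      unfold poly_trunc. rewrite tech5.
      replace (u ^ S N) with (u ^ l * u ^ S (N - l)) by (rewrite <- pow_add; f_equal; lia).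
      ring.
Qed.

Lemma poly_trunc_PS_one N u : poly_trunc PS_one N u = 1.
Proof.
  induction N as [|N IH]; unfold poly_trunc in *; simpl in *; [ring |].
  rewrite IH. ring.
Qed.

Section FracLin.

Variables c d : R.
Hypothesis Hc : 0 <= c.
Hypothesis Hcd : c <= d.

Lemma frac_lin_sub_trunc u M : 0 <= u ->
  frac_lin c d u - poly_trunc (frac_lin_coef c d) M u
  = (c - d) * (- d) ^ M * u ^ S M / (1 + d * u).
Proof.
  intros Hu. assert (Hp : 1 + d * u <> 0) by nra.
  induction M as [|M IH].
  - unfold frac_lin, poly_trunc. simpl. field. exact Hp.
  - unfold poly_trunc in *. rewrite tech5.
    transitivity (frac_lin c d u - sum_f_R0 (fun i => frac_lin_coef c d i * u ^ i) M
                  - frac_lin_coef c d (S M) * u ^ S M); [ring |].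
    rewrite IH. unfold frac_lin. simpl. field. exact Hp.
Qed.

Lemma frac_lin_range u : 0 <= u -> 0 < frac_lin c d u <= 1.
Proof.
  intros Hu. unfold frac_lin.
  assert (Hp : 0 < 1 + d * u) by nra.
  split; [apply Rdiv_lt_0_compat; nra |].
  apply Rmult_le_reg_r with (1 + d * u); [exact Hp |].
  unfold Rdiv. rewrite Rmult_assoc, Rinv_l by lra. nra.
Qed.

Lemma frac_lin_coef_bound n : Rabs (frac_lin_coef c d n) <= d ^ n.
Proof.
  destruct n as [|n]; simpl.
  - rewrite Rabs_R1. lra.
  - rewrite Rabs_mult, <- RPow_abs, Rabs_Ropp, Rabs_left1, Rabs_pos_eq by lra.
    apply Rmult_le_compat_r; [apply pow_le |]; lra.
Qed.

Lemma frac_lin_trunc_bound u M : 0 <= u ->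
  Rabs (frac_lin c d u - poly_trunc (frac_lin_coef c d) M u) <= (d * u) ^ S M.
Proof.
  intros Hu. rewrite frac_lin_sub_trunc by exact Hu.
  assert (Hp : 1 <= 1 + d * u) by nra.
  assert (Hinv : 0 < / (1 + d * u) <= 1)
    by (split; [apply Rinv_0_lt_compat; lra | rewrite <- Rinv_1; apply Rinv_le_contravar; lra]).
  pose proof (pow_le d M ltac:(lra)) as HdM. pose proof (pow_le u (S M) Hu) as HuM.
  unfold Rdiv. rewrite !Rabs_mult, <- RPow_abs, Rabs_Ropp, Rabs_left1, !Rabs_pos_eq by lra.
  rewrite Rpow_mult_distr. simpl (d ^ S M).
  set (X := d ^ M * u ^ S M).
  assert (HX : 0 <= X) by (apply Rmult_le_pos; assumption).
  assert (0 <= (d - c) * X * (1 - / (1 + d * u)))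
    by (apply Rmult_le_pos; [apply Rmult_le_pos |]; lra).
  assert (0 <= c * X) by (apply Rmult_le_pos; lra).
  replace (- (c - d) * d ^ M * u ^ S M) with ((d - c) * X) by (unfold X; ring).
  replace (d * d ^ M * u ^ S M) with (d * X) by (unfold X; ring).
  lra.
Qed.

End FracLin.

(** * Complete homogeneous symmetric polynomials *)

(* [hcomplete k n] is the complete homogeneous symmetric polynomial h_n(1, ..., k). *)
Fixpoint hcomplete (k n : nat) : R :=
  match k with
  | O => PS_one n
  | S k' => sum_f_R0 (fun l => hcomplete k' l * INR k ^ (n - l)) n
  end.

Lemma hcomplete_nonneg k n : 0 <= hcomplete k n.
Proof.
  revert n. induction k as [|k IH]; intros n.
  - destruct n; simpl; lra.
  - apply cond_pos_sum. intros l. apply Rmult_le_pos; [apply IH | apply pow_le, pos_INR].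
Qed.

Lemma hcomplete_0_r k : hcomplete k 0 = 1.
Proof. induction k as [|k IH]; [reflexivity |]. simpl. rewrite IH. ring. Qed.

Lemma hcomplete_S_S k n : hcomplete (S k) (S n) = hcomplete k (S n) + INR (S k) * hcomplete (S k) n.
Proof.
  cbn [hcomplete]. rewrite tech5, Nat.sub_diag, scal_sum.
  rewrite (sum_eq (fun l => hcomplete k l * INR (S k) ^ (S n - l))
                  (fun l => hcomplete k l * INR (S k) ^ (n - l) * INR (S k))).
  - simpl. ring.
  - intros i Hi. replace (S n - i)%nat with (S (n - i)) by lia. simpl. ring.
Qed.

Lemma hcomplete_1_l n : hcomplete 1 n = 1.
Proof.
  induction n as [|n IH]; [apply hcomplete_0_r |].
  rewrite hcomplete_S_S, IH. simpl. ring.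
Qed.

Lemma hcomplete_le_S k n : hcomplete k n <= hcomplete (S k) n.
Proof.
  destruct n as [|n]; [rewrite !hcomplete_0_r; lra |].
  rewrite hcomplete_S_S.
  pose proof (hcomplete_nonneg (S k) n). pose proof (pos_INR (S k)). nra.
Qed.

Lemma gamma_bound a k m : 0 < a -> Rabs (gamma a k m) <= hcomplete k m / a ^ m.
Proof.
  intros Ha. revert m. induction k as [|k IHk]; intros m.
  - destruct m as [|m]; cbn [hcomplete PS_one].
    + rewrite gamma_0_r, Rabs_R1. simpl. lra.
    + rewrite gamma_0_l, Rabs_R0. unfold Rdiv. lra.
  - induction m as [|m IHm].
    + rewrite gamma_0_r, hcomplete_0_r, Rabs_R1. simpl. lra.
    + replace (gamma a (S k) (S m)) with (gamma a k (S m) - INR (S k) / a * gamma a (S k) m)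
        by (rewrite <- (gamma_rec a k m); [ring | lra]).
      assert (Hd : 0 <= INR (S k) / a) by (apply Rdiv_le_0_compat; [apply pos_INR | lra]).
      unfold Rminus. eapply Rle_trans; [apply Rabs_triang |].
      rewrite Rabs_Ropp, Rabs_mult, (Rabs_pos_eq (INR (S k) / a)) by exact Hd.
      apply Rle_trans
        with (hcomplete k (S m) / a ^ S m + INR (S k) / a * (hcomplete (S k) m / a ^ m)).
      * apply Rplus_le_compat; [apply IHk | apply Rmult_le_compat_l; [exact Hd | exact IHm]].
      * right. rewrite hcomplete_S_S. simpl pow. field. split; [apply pow_nonzero |]; lra.
Qed.

Lemma alpha_bound beta k m : 0 < 1 + beta ->
  Rabs (alpha beta k m) <= hcomplete k m / (1 + beta) ^ m.
Proof.
  intros Hb. revert m. induction k as [|k IHk]; intros m.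
  - destruct m as [|m]; cbn [hcomplete PS_one].
    + rewrite alpha_0_r, Rabs_R1. simpl. lra.
    + rewrite alpha_0_l, Rabs_R0. unfold Rdiv. lra.
  - destruct m as [|m]; [rewrite alpha_0_r, hcomplete_0_r, Rabs_R1; simpl; lra |].
    rewrite alpha_rec by lra.
    assert (Hd : 0 <= INR k / (1 + beta)) by (apply Rdiv_le_0_compat; [apply pos_INR | lra]).
    eapply Rle_trans; [apply Rabs_triang |].
    rewrite Rabs_mult, (Rabs_pos_eq (INR k / (1 + beta))) by exact Hd.
    apply Rle_trans with (hcomplete k (S m) / (1 + beta) ^ S m
                          + INR (S k) / (1 + beta) * (hcomplete (S k) m / (1 + beta) ^ m)).
    + apply Rplus_le_compat; [apply IHk |].
      apply Rmult_le_compat; [exact Hd | apply Rabs_pos | |].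
      * unfold Rdiv. apply Rmult_le_compat_r; [left; apply Rinv_0_lt_compat; lra |].
        apply le_INR. lia.
      * eapply Rle_trans; [apply IHk |]. unfold Rdiv.
        apply Rmult_le_compat_r; [left; apply Rinv_0_lt_compat, pow_lt; lra |].
        apply hcomplete_le_S.
    + right. rewrite hcomplete_S_S. simpl pow. field. split; [apply pow_nonzero |]; lra.
Qed.

(** * Quotients of Pochhammer symbols *)

Section PochQuot.

Variables a beta : R.
Hypothesis Ha : 0 < a.
Hypothesis Hab : a <= 1 + beta.

Local Notation fac k := (frac_lin (INR k / (1 + beta)) (INR (S k) / a)).
Local Notation fac_coef k := (frac_lin_coef (INR k / (1 + beta)) (INR (S k) / a)).

Fixpoint poch_quot (k : nat) (u : R) : R :=
  match k with
  | O => 1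
  | S k' => poch_quot k' u * fac k' u
  end.

Definition poch_quot_coef (k : nat) : nat -> R := PS_mult (gamma a k) (alpha beta k).

Lemma fac_params k : 0 <= INR k / (1 + beta) /\ INR k / (1 + beta) <= INR (S k) / a.
Proof.
  rewrite S_INR. pose proof (pos_INR k).
  split; [apply Rdiv_le_0_compat; lra |].
  apply Rle_trans with (INR k / a).
  - unfold Rdiv. apply Rmult_le_compat_l; [lra |]. apply Rinv_le_contravar; lra.
  - unfold Rdiv. apply Rmult_le_compat_r; [left; apply Rinv_0_lt_compat |]; lra.
Qed.

Lemma poch_quot_coef_0 n : poch_quot_coef 0 n = PS_one n.
Proof.
  unfold poch_quot_coef. rewrite <- (PS_mult_one_r PS_one).
  apply PS_mult_ext; intros [|m].
  - apply gamma_0_r.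
  - apply gamma_0_l.
  - apply alpha_0_r.
  - apply alpha_0_l.
Qed.

Lemma poch_quot_coef_S k n :
  poch_quot_coef (S k) n = PS_mult (poch_quot_coef k) (fac_coef k) n.
Proof.
  set (c := INR k / (1 + beta)). set (d := INR (S k) / a).
  assert (Hgamma : forall m, PS_mult_lin d (gamma a (S k)) m = gamma a k m).
  { intros [|m]; unfold PS_mult_lin.
    - rewrite PS_incr_1_0, !gamma_0_r. ring.
    - rewrite PS_incr_1_S. apply gamma_rec. lra. }
  assert (Halpha : forall m, alpha beta (S k) m = PS_mult_lin c (alpha beta k) m).
  { intros [|m]; unfold PS_mult_lin.
    - rewrite PS_incr_1_0, !alpha_0_r. ring.
    - rewrite PS_incr_1_S. apply alpha_rec. lra. }
  revert n. apply (PS_mult_lin_inj d). intros n.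
  transitivity (PS_mult_lin c (poch_quot_coef k) n).
  - unfold poch_quot_coef. rewrite <- PS_mult_lin_mult_l, <- PS_mult_lin_mult_r.
    apply PS_mult_ext; [exact Hgamma | exact Halpha].
  - rewrite <- PS_mult_lin_mult_r, (PS_mult_ext _ (poch_quot_coef k) _ (PS_mult_lin c PS_one)).
    + rewrite PS_mult_lin_mult_r. apply PS_mult_lin_ext. intros m. symmetry. apply PS_mult_one_r.
    + reflexivity.
    + apply PS_mult_lin_frac_lin_coef.
Qed.

Lemma poch_quot_range k u : 0 <= u -> 0 < poch_quot k u <= 1.
Proof.
  intros Hu. induction k as [|k IH]; cbn [poch_quot]; [lra |].
  destruct (fac_params k) as [Hc Hcd].
  pose proof (frac_lin_range _ _ Hc Hcd u Hu). nra.
Qed.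

Lemma poch_quot_sub_trunc k N u :
  poch_quot (S k) u - poly_trunc (poch_quot_coef (S k)) N u
  = sum_f_R0 (fun l => poch_quot_coef k l * u ^ l
                       * (fac k u - poly_trunc (fac_coef k) (N - l) u)) N
    + (poch_quot k u - poly_trunc (poch_quot_coef k) N u) * fac k u.
Proof.
  replace (poly_trunc (poch_quot_coef (S k)) N u)
    with (poly_trunc (PS_mult (poch_quot_coef k) (fac_coef k)) N u)
    by (apply sum_eq; intros i _; rewrite poch_quot_coef_S; reflexivity).
  rewrite poly_trunc_PS_mult.
  rewrite (sum_eq (fun l => poch_quot_coef k l * u ^ l
                            * (fac k u - poly_trunc (fac_coef k) (N - l) u))
                  (fun l => poch_quot_coef k l * u ^ l * fac k u
                            - poch_quot_coef k l * u ^ l * poly_trunc (fac_coef k) (N - l) u))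
    by (intros; ring).
  rewrite minus_sum, <- scal_sum. unfold poly_trunc. simpl. ring.
Qed.

Lemma poch_quot_coef_bound k n : Rabs (poch_quot_coef k n) <= hcomplete k n / a ^ n.
Proof.
  revert n. induction k as [|k IH]; intros n.
  - rewrite poch_quot_coef_0. destruct n as [|n]; simpl.
    + rewrite Rabs_R1. lra.
    + rewrite Rabs_R0. unfold Rdiv. lra.
  - rewrite poch_quot_coef_S. unfold PS_mult. cbn [hcomplete].
    eapply Rle_trans; [apply sum_f_R0_triangle |].
    unfold Rdiv. rewrite (Rmult_comm (sum_f_R0 _ n)), scal_sum.
    apply sum_Rle. intros l Hl.
    destruct (fac_params k) as [Hc Hcd].
    rewrite Rabs_mult.
    apply Rle_trans with (hcomplete k l / a ^ l * (INR (S k) / a) ^ (n - l)).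
    + apply Rmult_le_compat; [apply Rabs_pos | apply Rabs_pos | apply IH |].
      apply frac_lin_coef_bound; assumption.
    + right. replace (a ^ n) with (a ^ l * a ^ (n - l)) by (rewrite <- pow_add; f_equal; lia).
      unfold Rdiv. rewrite Rpow_mult_distr, pow_inv.
      field. split; apply pow_nonzero; lra.
Qed.

Lemma poch_quot_trunc_bound k N u : 0 <= u ->
  Rabs (poch_quot k u - poly_trunc (poch_quot_coef k) N u) <= hcomplete k (S N) * (u / a) ^ S N.
Proof.
  intros Hu. revert N. induction k as [|k IH]; intros N.
  - unfold poly_trunc. rewrite (sum_eq _ (fun i => PS_one i * u ^ i))
      by (intros; rewrite poch_quot_coef_0; reflexivity).
    fold (poly_trunc PS_one N u). rewrite poly_trunc_PS_one.
    cbn [poch_quot hcomplete PS_one]. rewrite Rminus_diag, Rabs_R0. lra.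
  - rewrite poch_quot_sub_trunc.
    destruct (fac_params k) as [Hc Hcd].
    pose proof (frac_lin_range _ _ Hc Hcd u Hu) as Hfac.
    replace (hcomplete (S k) (S N))
      with (sum_f_R0 (fun l => hcomplete k l * INR (S k) ^ (S N - l)) N + hcomplete k (S N))
      by (cbn [hcomplete]; rewrite tech5, Nat.sub_diag; simpl; ring).
    eapply Rle_trans; [apply Rabs_triang |].
    rewrite Rmult_plus_distr_r. apply Rplus_le_compat.
    + eapply Rle_trans; [apply sum_f_R0_triangle |].
      rewrite (Rmult_comm (sum_f_R0 _ N)), scal_sum.
      apply sum_Rle. intros l Hl.
      pose proof (pow_le u l Hu) as Hul.
      rewrite !Rabs_mult, (Rabs_pos_eq (u ^ l)) by exact Hul.
      apply Rle_trans with (hcomplete k l / a ^ l * u ^ l * (INR (S k) / a * u) ^ S (N - l)).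
      * apply Rmult_le_compat.
        -- apply Rmult_le_pos; [apply Rabs_pos | exact Hul].
        -- apply Rabs_pos.
        -- apply Rmult_le_compat_r; [exact Hul | apply poch_quot_coef_bound].
        -- apply frac_lin_trunc_bound; assumption.
      * right. replace (S N - l)%nat with (S (N - l)) by lia.
        replace ((u / a) ^ S N) with ((u / a) ^ l * (u / a) ^ S (N - l))
          by (rewrite <- pow_add; f_equal; lia).
        unfold Rdiv. rewrite !Rpow_mult_distr, !pow_inv.
        field. split; apply pow_nonzero; lra.
    + rewrite Rabs_mult, (Rabs_pos_eq (fac k u)) by lra.
      rewrite <- (Rmult_1_r (hcomplete k (S N) * (u / a) ^ S N)).
      apply Rmult_le_compat; [apply Rabs_pos | lra | apply IH | lra].
Qed.

End PochQuot.

(** * Binomial bounds *)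

(* [negbinom M k] is the binomial coefficient (M + k choose M), the coefficient
   of y^k in (1 - y)^-(M+1). *)
Fixpoint negbinom (M k : nat) : R :=
  match M with
  | O => 1
  | S M' => negbinom M' k * (INR k + INR M' + 1) / (INR M' + 1)
  end.

Lemma INR_S_pos n : 0 < INR n + 1.
Proof. pose proof (pos_INR n). lra. Qed.

Lemma negbinom_pos M k : 0 < negbinom M k.
Proof.
  induction M as [|M IH]; cbn [negbinom]; [lra |].
  pose proof (pos_INR k). pose proof (pos_INR M).
  apply Rdiv_lt_0_compat; [apply Rmult_lt_0_compat |]; lra.
Qed.

Lemma negbinom_0_r M : negbinom M 0 = 1.
Proof.
  induction M as [|M IH]; [reflexivity |].
  cbn [negbinom]. rewrite IH. simpl INR. field. apply Rgt_not_eq, INR_S_pos.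
Qed.

Lemma negbinom_S_r M k : negbinom M (S k) * (INR k + 1) = negbinom M k * (INR k + INR M + 1).
Proof.
  induction M as [|M IH]; [simpl; ring |].
  cbn [negbinom]. rewrite !S_INR. pose proof (INR_S_pos M).
  transitivity (negbinom M (S k) * (INR k + 1) * (INR k + 1 + INR M + 1) / (INR M + 1));
    [field; lra |].
  rewrite IH. field. lra.
Qed.

Lemma negbinom_pascal M k : negbinom (S M) (S k) = negbinom (S M) k + negbinom M (S k).
Proof.
  pose proof (INR_S_pos k). pose proof (INR_S_pos M).
  apply (Rmult_eq_reg_r (INR k + 1)); [| lra].
  rewrite negbinom_S_r, Rmult_plus_distr_r, negbinom_S_r.
  cbn [negbinom]. rewrite S_INR. field. lra.
Qed.

Lemma negbinom_le_S M k : negbinom M k <= negbinom M (S k).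
Proof.
  destruct M as [|M]; [simpl; lra |].
  rewrite negbinom_pascal. pose proof (negbinom_pos M (S k)). lra.
Qed.

Lemma negbinom_sum M k : sum_f_R0 (negbinom M) k = negbinom (S M) k.
Proof.
  induction k as [|k IH]; [cbn [sum_f_R0]; rewrite !negbinom_0_r; reflexivity |].
  rewrite tech5, IH, negbinom_pascal. reflexivity.
Qed.

Lemma is_series_negbinom y M : 0 <= y < 1 ->
  is_series (fun k => negbinom M k * y ^ k) (/ (1 - y) ^ S M).
Proof.
  intros Hy. assert (Hgeom : is_series (fun k => y ^ k) (/ (1 - y)))
    by (apply is_series_geom; rewrite Rabs_pos_eq; lra).
  induction M as [|M IH].
  - apply is_series_ext with (fun k => y ^ k); [intros; simpl; ring |].
    rewrite pow_1. exact Hgeom.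
  - replace (/ (1 - y) ^ S (S M)) with (/ (1 - y) ^ S M * / (1 - y))
      by (rewrite <- Rinv_mult; f_equal; simpl; ring).
    apply is_series_ext
      with (fun n => sum_f_R0 (fun k => negbinom M k * y ^ k * y ^ (n - k)) n).
    + intros n. rewrite <- negbinom_sum, (Rmult_comm (sum_f_R0 _ n)), scal_sum.
      apply sum_eq. intros k Hk.
      rewrite Rmult_assoc, <- pow_add. f_equal. f_equal. lia.
    + apply is_series_mult_pos; [exact IH | exact Hgeom | |]; intros n.
      * apply Rmult_le_pos; [left; apply negbinom_pos | apply pow_le; lra].
      * apply pow_le. lra.
Qed.

Lemma negbinom_mult_le A B :
  exists C, forall k, negbinom A k * negbinom B k <= C * negbinom (A + B) k.
Proof.
  induction B as [|B [C HC]].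
  - exists 1. intros k. rewrite Nat.add_0_r. simpl. lra.
  - exists (C * (INR (A + B) + 1) / (INR B + 1)). intros k.
    replace (A + S B)%nat with (S (A + B)) by lia. cbn [negbinom].
    pose proof (INR_S_pos B). pose proof (INR_S_pos (A + B)). pose proof (pos_INR k).
    pose proof (le_INR B (A + B) ltac:(lia)).
    pose proof (negbinom_pos A k). pose proof (negbinom_pos B k).
    apply (Rmult_le_reg_r (INR B + 1)); [lra |].
    replace (negbinom A k * (negbinom B k * (INR k + INR B + 1) / (INR B + 1)) * (INR B + 1))
      with (negbinom A k * negbinom B k * (INR k + INR B + 1)) by (field; lra).
    replace (C * (INR (A + B) + 1) / (INR B + 1)
             * (negbinom (A + B) k * (INR k + INR (A + B) + 1) / (INR (A + B) + 1)) * (INR B + 1))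
      with (C * negbinom (A + B) k * (INR k + INR (A + B) + 1)) by (field; lra).
    apply Rmult_le_compat; [apply Rmult_le_pos; lra | lra | apply HC | lra].
Qed.

(* The value 1 at n = 0, instead of 0!/2, makes [hcomplete_le_negbinom] hold for n = 0. *)
Definition fact2_half (n : nat) : R :=
  match n with O => 1 | S _ => INR (fact (2 * n)) / 2 end.

Lemma fact2_half_ge_1 n : 1 <= fact2_half n.
Proof.
  destruct n as [|n]; [simpl; lra |].
  unfold fact2_half. replace (2 * S n)%nat with (S (S (2 * n))) by lia.
  assert (H : (2 <= fact (S (S (2 * n))))%nat)
    by (cbn [fact]; pose proof (lt_O_fact (2 * n)); nia).
  apply le_INR in H. replace (INR 2) with 2 in H by (simpl; ring). lra.
Qed.

Lemma fact2_half_step n k :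
  (INR k + 2) * fact2_half n * (2 * INR n + 1) <= fact2_half (S n) * (INR k + 2 * INR n + 2).
Proof.
  pose proof (pos_INR k) as Hk. destruct n as [|n].
  - unfold fact2_half. simpl. lra.
  - assert (E : fact2_half (S (S n))
                 = fact2_half (S n) * (2 * INR (S n) + 2) * (2 * INR (S n) + 1)).
    { unfold fact2_half. replace (2 * S (S n))%nat with (S (S (2 * S n))) by lia.
      rewrite !INR_fact_S.
      replace (INR (S (S (2 * S n)))) with (2 * INR (S n) + 2)
        by (rewrite !S_INR, mult_INR, !S_INR, INR_0; ring).
      replace (INR (S (2 * S n))) with (2 * INR (S n) + 1)
        by (rewrite !S_INR, mult_INR, !S_INR, INR_0; ring).
      field. }
    rewrite E. pose proof (fact2_half_ge_1 (S n)). pose proof (pos_INR (S n)).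
    assert (0 <= fact2_half (S n) * (2 * INR (S n) + 1)) by nra.
    assert (INR k + 2 <= (2 * INR (S n) + 2) * (INR k + 2 * INR (S n) + 2)) by nra.
    nra.
Qed.

Lemma hcomplete_le_negbinom n : forall k, hcomplete (S k) n <= fact2_half n * negbinom (2 * n) k.
Proof.
  induction n as [|n IHn]; intros k.
  - rewrite hcomplete_0_r. simpl. lra.
  - induction k as [|k IHk].
    + rewrite hcomplete_1_l, negbinom_0_r, Rmult_1_r. apply fact2_half_ge_1.
    + rewrite hcomplete_S_S.
      replace (2 * S n)%nat with (S (S (2 * n))) by lia.
      rewrite (negbinom_pascal (S (2 * n)) k).
      replace (S (S (2 * n))) with (2 * S n)%nat by lia.
      rewrite Rmult_plus_distr_l. apply Rplus_le_compat; [exact IHk |].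
      apply Rle_trans with (INR (S (S k)) * (fact2_half n * negbinom (2 * n) (S k)));
        [apply Rmult_le_compat_l; [apply pos_INR | apply IHn] |].
      cbn [negbinom]. rewrite mult_INR, !S_INR, INR_0.
      replace (0 + 1 + 1) with 2 by ring.
      pose proof (negbinom_pos (2 * n) (S k)) as Hpos.
      pose proof (fact2_half_step n k) as Hstep. pose proof (pos_INR n).
      set (B := negbinom (2 * n) (S k)) in *.
      apply (Rmult_le_reg_r (2 * INR n + 1)); [lra |].
      replace (fact2_half (S n) * (B * (INR k + 1 + 2 * INR n + 1) / (2 * INR n + 1))
               * (2 * INR n + 1))
        with (fact2_half (S n) * (INR k + 2 * INR n + 2) * B) by (field; lra).
      replace ((INR k + 1 + 1) * (fact2_half n * B) * (2 * INR n + 1))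
        with ((INR k + 2) * fact2_half n * (2 * INR n + 1) * B) by ring.
      apply Rmult_le_compat_r; [lra | exact Hstep].
Qed.

Lemma hcomplete_le_negbinom_le n k : hcomplete k n <= fact2_half n * negbinom (2 * n) k.
Proof.
  pose proof (fact2_half_ge_1 n). destruct k as [|k].
  - rewrite negbinom_0_r. destruct n; cbn [hcomplete PS_one]; lra.
  - eapply Rle_trans; [apply hcomplete_le_negbinom |].
    apply Rmult_le_compat_l; [lra | apply negbinom_le_S].
Qed.

(** * The asymptotic expansion *)

Lemma ex_series_le_R (u v : nat -> R) :
  (forall n, Rabs (u n) <= v n) -> ex_series v -> ex_series u.
Proof. exact (@ex_series_le R_AbsRing R_CompleteNormedModule u v). Qed.

Lemma is_series_sum_f_R0 (f : nat -> nat -> R) (l : nat -> R) N :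
  (forall j, (j <= N)%nat -> is_series (f j) (l j)) ->
  is_series (fun k => sum_f_R0 (fun j => f j k) N) (sum_f_R0 l N).
Proof.
  induction N as [|N IH]; intros H; [apply H; lia |].
  apply (@is_series_plus R_AbsRing R_NormedModule); [apply IH; intros j Hj |]; apply H; lia.
Qed.

Lemma poch_pos q k : 0 < q -> 0 < poch q k.
Proof.
  intros Hq. induction k as [|k IH]; cbn [poch]; [lra |].
  pose proof (pos_INR k). apply Rmult_lt_0_compat; lra.
Qed.

Lemma poch_1 k : poch 1 k = INR (fact k).
Proof.
  induction k as [|k IH]; [reflexivity |].
  cbn [poch]. rewrite IH, INR_fact_S, S_INR. ring.
Qed.

Section Asymptotics.

Variables beta a x : R.
Hypothesis Ha : 0 < a.
Hypothesis Hab : a <= 1 + beta.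
Hypothesis Hx : 0 <= x.
Hypothesis Hy : (1 + beta) / a * x < 1.

Local Notation y := ((1 + beta) / a * x).

Lemma y_nonneg : 0 <= y.
Proof. apply Rmult_le_pos; [apply Rdiv_le_0_compat |]; lra. Qed.

Lemma poch_quot_poch t k : 0 < t ->
  poch (t * (1 + beta)) k / poch (a * t + 1) k = ((1 + beta) / a) ^ k * poch_quot a beta k (/ t).
Proof.
  intros Ht. induction k as [|k IH]; [simpl; field |].
  pose proof (poch_pos (a * t + 1) k ltac:(nra)). pose proof (pos_INR k).
  cbn [poch poch_quot pow].
  transitivity (poch (t * (1 + beta)) k / poch (a * t + 1) k
                * ((t * (1 + beta) + INR k) / (a * t + 1 + INR k))); [field; split; nra |].
  rewrite IH. unfold frac_lin. rewrite S_INR. field. repeat split; nra.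
Qed.

Lemma hyp2F1_terms_poch_quot t k : 0 < t ->
  hyp2F1_terms 1 (t * (1 + beta)) (a * t + 1) x k = y ^ k * poch_quot a beta k (/ t).
Proof.
  intros Ht. unfold hyp2F1_terms. rewrite poch_1.
  pose proof (poch_pos (a * t + 1) k ltac:(nra)). pose proof (INR_fact_neq_0 k).
  transitivity (poch (t * (1 + beta)) k / poch (a * t + 1) k * x ^ k); [field; lra |].
  rewrite poch_quot_poch, Rpow_mult_distr by exact Ht. ring.
Qed.

Lemma ex_series_hyp2F1_terms t : 0 < t ->
  ex_series (hyp2F1_terms 1 (t * (1 + beta)) (a * t + 1) x).
Proof.
  intros Ht. apply ex_series_le_R with (fun k => y ^ k).
  - intros k. pose proof y_nonneg.
    rewrite hyp2F1_terms_poch_quot, Rabs_mult, <- RPow_abs, Rabs_pos_eq by assumption.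
    destruct (poch_quot_range a beta Ha Hab k (/ t)) as [Hpos Hle];
      [left; apply Rinv_0_lt_compat, Ht |].
    rewrite Rabs_pos_eq by lra.
    rewrite <- (Rmult_1_r (y ^ k)) at 2. apply Rmult_le_compat_l; [apply pow_le |]; lra.
  - eexists. apply is_series_geom. pose proof y_nonneg. rewrite Rabs_pos_eq; lra.
Qed.

Lemma ex_series_inner_terms i j : ex_series (inner_terms beta a x i j).
Proof.
  set (m := (i - j)%nat).
  destruct (negbinom_mult_le (2 * j) (2 * m)) as [C HC].
  assert (Hb : 0 < 1 + beta) by lra.
  pose proof y_nonneg as Hy0.
  pose proof (pow_lt a j Ha) as Haj. pose proof (pow_lt (1 + beta) m Hb) as Hbm.
  set (K := fact2_half j * fact2_half m / (a ^ j * (1 + beta) ^ m)).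
  assert (HK : 0 <= K).
  { pose proof (fact2_half_ge_1 j). pose proof (fact2_half_ge_1 m).
    apply Rdiv_le_0_compat; [nra | apply Rmult_lt_0_compat; lra]. }
  apply ex_series_le_R with (fun k => K * C * (negbinom (2 * j + 2 * m) k * y ^ k)).
  - intros k. unfold inner_terms. fold m.
    rewrite !Rabs_mult, <- RPow_abs, (Rabs_pos_eq y) by exact Hy0.
    assert (Hg : Rabs (gamma a k j) <= fact2_half j * negbinom (2 * j) k / a ^ j).
    { eapply Rle_trans; [apply gamma_bound, Ha |]. unfold Rdiv.
      apply Rmult_le_compat_r; [left; apply Rinv_0_lt_compat, Haj |].
      apply hcomplete_le_negbinom_le. }
    assert (Hal : Rabs (alpha beta k m) <= fact2_half m * negbinom (2 * m) k / (1 + beta) ^ m).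
    { eapply Rle_trans; [apply alpha_bound, Hb |]. unfold Rdiv.
      apply Rmult_le_compat_r; [left; apply Rinv_0_lt_compat, Hbm |].
      apply hcomplete_le_negbinom_le. }
    apply Rle_trans with (fact2_half j * negbinom (2 * j) k / a ^ j
                          * (fact2_half m * negbinom (2 * m) k / (1 + beta) ^ m) * y ^ k).
    + apply Rmult_le_compat_r; [apply pow_le, Hy0 |].
      apply Rmult_le_compat; [apply Rabs_pos | apply Rabs_pos | exact Hg | exact Hal].
    + replace (fact2_half j * negbinom (2 * j) k / a ^ j
               * (fact2_half m * negbinom (2 * m) k / (1 + beta) ^ m) * y ^ k)
        with (K * (negbinom (2 * j) k * negbinom (2 * m) k) * y ^ k)
        by (unfold K; field; lra).
      replace (K * C * (negbinom (2 * j + 2 * m) k * y ^ k))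
        with (K * (C * negbinom (2 * j + 2 * m) k) * y ^ k) by ring.
      apply Rmult_le_compat_r; [apply pow_le, Hy0 |].
      apply Rmult_le_compat_l; [exact HK | apply HC].
  - apply (ex_series_scal_l (K * C) (fun k => negbinom (2 * j + 2 * m) k * y ^ k)).
    eexists. apply is_series_negbinom. lra.
Qed.

Lemma is_series_asym_coef i :
  is_series (fun k => poch_quot_coef a beta k i * y ^ k) (asym_coef beta a x i).
Proof.
  unfold asym_coef. rewrite sum_n_Reals.
  apply is_series_ext with (fun k => sum_f_R0 (fun j => inner_terms beta a x i j k) i).
  - intros k. unfold poch_quot_coef, PS_mult, inner_terms.
    rewrite (Rmult_comm (sum_f_R0 _ i)), scal_sum. reflexivity.
  - apply is_series_sum_f_R0. intros j _. apply Series_correct, ex_series_inner_terms.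
Qed.

Lemma is_series_asym_partial t N : 0 < t ->
  is_series (fun k => y ^ k * poly_trunc (poch_quot_coef a beta k) N (/ t))
            (asym_partial beta a x t (S N)).
Proof.
  intros Ht. unfold asym_partial. rewrite sum_n_Reals.
  apply is_series_ext
    with (fun k => sum_f_R0 (fun i => poch_quot_coef a beta k i * y ^ k / t ^ i) N).
  - intros k. unfold poly_trunc. rewrite scal_sum. apply sum_eq. intros i _.
    rewrite pow_inv. unfold Rdiv. ring.
  - apply is_series_sum_f_R0. intros i _. apply is_series_scal_r, is_series_asym_coef.
Qed.

Lemma ex_series_hcomplete n : ex_series (fun k => hcomplete k n * y ^ k).
Proof.
  pose proof y_nonneg.
  apply ex_series_le_R with (fun k => fact2_half n * (negbinom (2 * n) k * y ^ k)).
  - intros k.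
    rewrite Rabs_pos_eq by (apply Rmult_le_pos; [apply hcomplete_nonneg | apply pow_le; lra]).
    rewrite <- Rmult_assoc. apply Rmult_le_compat_r; [apply pow_le; lra |].
    apply hcomplete_le_negbinom_le.
  - apply (ex_series_scal_l (fact2_half n) (fun k => negbinom (2 * n) k * y ^ k)).
    eexists. apply is_series_negbinom. lra.
Qed.

Lemma Series_hcomplete_le n : (0 < n)%nat ->
  Series (fun k => hcomplete k n * y ^ k) <= y * fact2_half n / (1 - y) ^ S (2 * n).
Proof.
  intros Hn. pose proof y_nonneg.
  rewrite Series_incr_1 by apply ex_series_hcomplete.
  destruct n as [|n]; [lia |]. change (hcomplete 0 (S n)) with 0. rewrite Rmult_0_l, Rplus_0_l.
  replace (y * fact2_half (S n) / (1 - y) ^ S (2 * S n))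
    with (y * fact2_half (S n) * Series (fun k => negbinom (2 * S n) k * y ^ k))
    by (rewrite (is_series_unique _ _ (is_series_negbinom y (2 * S n) ltac:(lra))); field;
        split; [| apply pow_nonzero]; lra).
  rewrite <- Series_scal_l. apply Series_le.
  - intros k. split.
    + apply Rmult_le_pos; [apply hcomplete_nonneg | apply pow_le; lra].
    + cbn [pow]. pose proof (pow_le y k H).
      replace (y * fact2_half (S n) * (negbinom (2 * S n) k * y ^ k))
        with (fact2_half (S n) * negbinom (2 * S n) k * (y * y ^ k)) by ring.
      apply Rmult_le_compat_r; [apply Rmult_le_pos; lra | apply hcomplete_le_negbinom].
  - apply (ex_series_scal_l (y * fact2_half (S n)) (fun k => negbinom (2 * S n) k * y ^ k)).
    eexists. apply is_series_negbinom. lra.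
Qed.

Lemma hyp2F1_sub_asym_partial_le t N : 0 < t ->
  Rabs (hyp2F1 1 (t * (1 + beta)) (a * t + 1) x - asym_partial beta a x t (S N))
  <= (/ t / a) ^ S N * (y * fact2_half (S N) / (1 - y) ^ S (2 * S N)).
Proof.
  intros Ht. pose proof y_nonneg as Hy0.
  assert (Hu : 0 <= / t) by (left; apply Rinv_0_lt_compat, Ht).
  assert (HF : is_series (fun k => y ^ k * poch_quot a beta k (/ t))
                         (hyp2F1 1 (t * (1 + beta)) (a * t + 1) x)).
  { apply is_series_ext with (hyp2F1_terms 1 (t * (1 + beta)) (a * t + 1) x);
      [intros k; apply hyp2F1_terms_poch_quot, Ht |].
    apply Series_correct, ex_series_hyp2F1_terms, Ht. }
  pose proof (is_series_minus _ _ _ _ HF (is_series_asym_partial t N Ht)) as Hdiff.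
  set (bound := fun k => (/ t / a) ^ S N * (hcomplete k (S N) * y ^ k)).
  assert (Hterm : forall k, Rabs (y ^ k * poch_quot a beta k (/ t)
                                  - y ^ k * poly_trunc (poch_quot_coef a beta k) N (/ t))
                            <= bound k).
  { intros k. pose proof (pow_le y k Hy0).
    rewrite <- Rmult_minus_distr_l, Rabs_mult, (Rabs_pos_eq (y ^ k)) by assumption.
    eapply Rle_trans;
      [apply Rmult_le_compat_l; [assumption | apply poch_quot_trunc_bound; assumption] |].
    right. unfold bound. ring. }
  assert (Hbound : ex_series bound)
    by apply (ex_series_scal_l ((/ t / a) ^ S N) (fun k => hcomplete k (S N) * y ^ k)),
             ex_series_hcomplete.
  replace (hyp2F1 1 (t * (1 + beta)) (a * t + 1) x - asym_partial beta a x t (S N))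
    with (Series (fun k => y ^ k * poch_quot a beta k (/ t)
                           - y ^ k * poly_trunc (poch_quot_coef a beta k) N (/ t)))
    by (apply is_series_unique; exact Hdiff).
  eapply Rle_trans.
  { apply Series_Rabs, ex_series_le_R with bound; [| exact Hbound].
    intros k. rewrite Rabs_Rabsolu. apply Hterm. }
  eapply Rle_trans.
  { apply Series_le; [| exact Hbound]. intros k. split; [apply Rabs_pos | apply Hterm]. }
  unfold bound. rewrite Series_scal_l.
  apply Rmult_le_compat_l; [apply pow_le; apply Rdiv_le_0_compat; lra |].
  apply Series_hcomplete_le. lia.
Qed.

Lemma hyp2F1_asym_error t N : 0 < t ->
  Rabs (hyp2F1 1 (t * (1 + beta)) (a * t + 1) x - asym_partial beta a x t (S N))
  <= INR (fact (2 * S N)) / 2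
     * ((1 + beta) * x * (a + (1 + beta) * x))
     / (a ^ (S N + 2) * (1 - (1 + beta) * x / a) ^ (2 * S N + 1))
     * / t ^ S N.
Proof.
  intros Ht. eapply Rle_trans; [apply hyp2F1_sub_asym_partial_le, Ht |].
  pose proof y_nonneg as Hy0.
  change (INR (fact (2 * S N)) / 2) with (fact2_half (S N)).
  replace ((1 + beta) * x) with (a * y) by (field; lra).
  replace (a * y / a) with y by (field; lra).
  replace (2 * S N + 1)%nat with (S (2 * S N)) by lia.
  pose proof (pow_lt (1 - y) (S (2 * S N)) ltac:(lra)) as HQ.
  pose proof (pow_lt t (S N) Ht) as Htn. pose proof (pow_lt a (S N) Ha) as Han.
  set (X := (/ t / a) ^ S N * (y * fact2_half (S N) / (1 - y) ^ S (2 * S N))).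
  assert (HX : 0 <= X).
  { pose proof (fact2_half_ge_1 (S N)). apply Rmult_le_pos.
    - apply pow_le, Rdiv_le_0_compat; [left; apply Rinv_0_lt_compat |]; lra.
    - apply Rdiv_le_0_compat; [apply Rmult_le_pos |]; lra. }
  replace (fact2_half (S N) * (a * y * (a + a * y))
           / (a ^ (S N + 2) * (1 - y) ^ S (2 * S N)) * / t ^ S N)
    with (X * (1 + y)).
  - rewrite <- (Rmult_1_r X) at 1. apply Rmult_le_compat_l; lra.
  - unfold X. replace (/ t / a) with (/ (t * a)) by (field; lra).
    rewrite pow_add, pow_inv, Rpow_mult_distr. field. repeat split; lra.
Qed.

Lemma hyp2F1_asym_lim N :
  is_lim (fun t => t ^ N * (hyp2F1 1 (t * (1 + beta)) (a * t + 1) x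
                            - asym_partial beta a x t (S N))) p_infty 0.
Proof.
  set (K := INR (fact (2 * S N)) / 2
            * ((1 + beta) * x * (a + (1 + beta) * x))
            / (a ^ (S N + 2) * (1 - (1 + beta) * x / a) ^ (2 * S N + 1))).
  assert (HK : is_lim (fun t => K * / t) p_infty 0).
  { replace (Finite 0) with (Rbar_mult K (Rbar_inv p_infty)) by (simpl; f_equal; ring).
    apply is_lim_scal_l, is_lim_inv; [apply is_lim_id | discriminate]. }
  apply is_lim_le_le_loc with (fun t => - (K * / t)) (fun t => K * / t).
  - exists 0. intros t Ht.
    pose proof (hyp2F1_asym_error t N Ht) as Herr. fold K in Herr.
    pose proof (pow_lt t N Ht) as HtN.
    apply Rabs_le_between. rewrite Rabs_mult, (Rabs_pos_eq (t ^ N)) by lra.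
    replace (K * / t) with (t ^ N * (K * / t ^ S N)) by (simpl; field; lra).
    apply Rmult_le_compat_l; [lra | exact Herr].
  - replace (Finite 0) with (Rbar_opp 0) by (simpl; f_equal; ring).
    apply is_lim_opp, HK.
  - exact HK.
Qed.

End Asymptotics.

Theorem theorem5 (beta a x : R) :
  0 <= beta -> 0 < a -> a <= 1 + beta ->
  0 <= x -> x <= (1 + beta) / a * x -> (1 + beta) / a * x < 1 ->
  (* the series involved converge *)
  (forall t : R, 0 < t ->
     ex_series (hyp2F1_terms 1 (t * (1 + beta)) (a * t + 1) x)) /\
  (forall i j : nat, (j <= i)%nat -> ex_series (inner_terms beta a x i j)) /\
  (* explicit error bound *)
  (forall (n : nat) (t : R), (0 < n)%nat -> 0 < t ->
     Rabs (hyp2F1 1 (t * (1 + beta)) (a * t + 1) x - asym_partial beta a x t n)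
     <= INR (fact (2 * n)) / 2
        * ((1 + beta) * x * (a + (1 + beta) * x))
        / (a ^ (n + 2) * (1 - (1 + beta) * x / a) ^ (2 * n + 1))
        * / t ^ n) /\
  (* asymptotic (Poincare) expansion as t -> +oo *)
  (forall N : nat,
     is_lim (fun t => t ^ N * (hyp2F1 1 (t * (1 + beta)) (a * t + 1) x
                               - asym_partial beta a x t (S N)))
            p_infty 0).
Proof.
  intros _ Ha Hab Hx _ Hy.
  split; [intros t Ht; apply ex_series_hyp2F1_terms; assumption |].
  split; [intros i j _; apply ex_series_inner_terms; assumption |].
  split; [| intros N; apply hyp2F1_asym_lim; assumption].
  intros [|N] t Hn Ht; [lia |]. apply hyp2F1_asym_error; assumption.
Qed.
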